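(* Let $\mathcal E$ be a semilattice with zero, $\mathbf K$ a field, $A$ an associative $\mathbf K$-algebra, and $\pi:\mathcal E\to A$ a map with $\pi(0)=0$ and $\pi(xy)=\pi(x)\pi(y)$ for all $x,y$, such that $A$ is generated as an algebra by $\pi(\mathcal E)$. Then (i) the spectrum $\hat A$ of $A$ is homeomorphic to the space $\hat{\mathcal E}_\pi$ of $\pi$-tight characters of $\mathcal E$; (ii) $A$ is isomorphic to the algebra $C_c(\hat{\mathcal E}_\pi,\mathbf K)$ of all locally constant, compactly supported $\mathbf K$-valued functions on $\hat{\mathcal E}_\pi$.
   Context: Under the hypotheses $A$ is commutative, and $\mathcal B_A=\{e\in A:e^2=e\}$ is a Boolean algebra (possibly without top) under $e\wedge f=ef$, $e\vee f=e+f-ef$, into which $\pi$ maps. A character of $\mathcal E$ is a nonzero map $\varphi:\mathcal E\to\{0,1\}$ with $\varphi(0)=0$ and $\varphi(xy)=\varphi(x)\varphi(y)$; the spectrum $\hat{\mathcal E}$ is the set of characters with the topology of pointwise convergence (induced from $\{0,1\}^{\mathcal E}$). A character $\varphi$ is $\pi$-tight if for all $n\ge1$ and $x,y_1,\dots,y_n\in\mathcal E$, $\pi(x)\le\bigvee_i\pi(y_i)$ in $\mathcal B_A$ implies $\varphi(x)\le\bigvee_i\varphi(y_i)$; $\hat{\mathcal E}_\pi\subseteq\hat{\mathcal E}$ is the (closed) subspace of $\pi$-tight characters. The spectrum $\hat A$ is the set of nonzero $\mathbf K$-algebra homomorphisms $A\to\mathbf K$ with the topology of pointwise convergence, $\mathbf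 K$ being discrete. *)

From HB Require Import structures.
From mathcomp Require Import all_boot all_order all_algebra.
From Stdlib Require List.
Set Implicit Arguments. Unset Strict Implicit. Unset Printing Implicit Defensive.
Import Order.TTheory GRing.Theory.
Local Open Scope ring_scope.

Definition topology (T : Type) := (T -> Prop) -> Prop.

(* Topology of pointwise convergence on X -> Y, Y discrete:
   U is open iff each f in U has a finite set of points s such that every g
   agreeing with f on s lies in U (basic open sets of the product topology). *)
Definition pointwise_top (X Y : Type) : topology (X -> Y) :=
  fun U => forall f, U f -> exists s : list X,
      forall g, (forall x, List.In x s -> g x = f x) -> U g.

Definition subspace_top (T : Type) (tau : topology T) (P : T -> Prop)
  : topology {t | P t} :=
  fun V => exists U, tau U /\ forall v : {t | P t}, V v <-> U (proj1_sig v).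

(* Homeomorphism: a bijection h such that U is open iff h^{-1}(U) is open
   (i.e. h is continuous and open). *)
Definition homeomorphic (T1 T2 : Type) (tau1 : topology T1) (tau2 : topology T2)
  : Prop :=
  exists h : T1 -> T2, bijective h /\
    forall U : T2 -> Prop, tau2 U <-> tau1 (fun t => U (h t)).

Definition compact (T : Type) (tau : topology T) (C : T -> Prop) : Prop :=
  forall (I : Type) (U : I -> T -> Prop),
    (forall i, tau (U i)) -> (forall x, C x -> exists i, U i x) ->
    exists s : list I, forall x, C x -> exists i, List.In i s /\ U i x.

Definition closure (T : Type) (tau : topology T) (S : T -> Prop) : T -> Prop :=
  fun x => forall U, tau U -> U x -> exists y, U y /\ S y.

Definition locally_constant (T Y : Type) (tau : topology T) (f : T -> Y) : Prop :=
  forall x, exists U, tau U /\ U x /\ forall y, U y -> f y = f x.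

Definition Cc (T : Type) (tau : topology T) (K : fieldType) (f : T -> K) : Prop :=
  locally_constant tau f /\ compact tau (closure tau (fun x => f x <> 0)).

(* A semilattice with zero: a meet-semilattice with bottom; xy := x `&` y,
   0 := \bot. *)

(* Characters E -> {0,1}, with {0,1} rendered as bool. *)
Definition is_character (d : Order.disp_t) (E : bMeetSemilatticeType d)
  (phi : E -> bool) : Prop :=
  (exists x, phi x) /\ phi \bot%O = false /\
  forall x y, phi (x `&` y)%O = phi x && phi y.

(* Order and finite joins in the Boolean algebra of idempotents of A:
   e <= f iff e f = e; e \/ f = e + f - e f. *)
Definition idem_le (A : zmodType) (mul : A -> A -> A) (e f : A) : Prop :=
  mul e f = e.

Fixpoint idem_join (A : zmodType) (mul : A -> A -> A) (l : seq A) : A :=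
  match l with
  | [::] => 0
  | e :: l' => e + idem_join mul l' - mul e (idem_join mul l')
  end.

Definition is_tight (d : Order.disp_t) (E : bMeetSemilatticeType d)
  (A : zmodType) (mul : A -> A -> A) (pi : E -> A) (phi : E -> bool) : Prop :=
  forall (x : E) (ys : seq E), ys <> [::] ->
    idem_le mul (pi x) (idem_join mul (map pi ys)) ->
    (phi x -> has phi ys).

Definition tight_character (d : Order.disp_t) (E : bMeetSemilatticeType d)
  (A : zmodType) (mul : A -> A -> A) (pi : E -> A) (phi : E -> bool) : Prop :=
  is_character phi /\ is_tight mul pi phi.

Definition is_algebra (K : fieldType) (A : lmodType K) (mul : A -> A -> A)
  : Prop :=
  (forall x y z, mul x (mul y z) = mul (mul x y) z) /\
  (forall x y z, mul (x + y) z = mul x z + mul y z) /\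
  (forall x y z, mul x (y + z) = mul x y + mul x z) /\
  (forall (a : K) x y, mul (a *: x) y = a *: mul x y) /\
  (forall (a : K) x y, mul x (a *: y) = a *: mul x y).

Definition generates (K : fieldType) (A : lmodType K) (mul : A -> A -> A)
  (G : A -> Prop) : Prop :=
  forall S : A -> Prop,
    S 0 -> (forall x y, S x -> S y -> S (x + y)) ->
    (forall (a : K) x, S x -> S (a *: x)) ->
    (forall x y, S x -> S y -> S (mul x y)) ->
    (forall x, G x -> S x) -> forall x, S x.

Definition is_alg_character (K : fieldType) (A : lmodType K)
  (mul : A -> A -> A) (chi : A -> K) : Prop :=
  (exists x, chi x <> 0) /\
  (forall x y, chi (x + y) = chi x + chi y) /\
  (forall (a : K) x, chi (a *: x) = a * chi x) /\
  (forall x y, chi (mul x y) = chi x * chi y).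

Definition alg_iso_Cc (K : fieldType) (A : lmodType K) (mul : A -> A -> A)
  (T : Type) (tau : topology T) : Prop :=
  exists Phi : A -> (T -> K),
    injective Phi /\
    (forall x, Cc tau (Phi x)) /\
    (forall f, Cc tau f -> exists x, Phi x = f) /\
    (forall x y t, Phi (x + y) t = Phi x t + Phi y t) /\
    (forall (a : K) x t, Phi (a *: x) t = a * Phi x t) /\
    (forall x y t, Phi (mul x y) t = Phi x t * Phi y t).

Arguments pointwise_top : clear implicits.
Arguments subspace_top {T} tau P.

From Pilot Require Import Defs.
From HB Require Import structures.
From mathcomp Require Import all_boot all_order all_algebra.
From mathcomp Require Import boolp.
From mathcomp Require classical_sets.
Set Implicit Arguments. Unset Strict Implicit. Unset Printing Implicit Defensive.
Import Order.TTheory GRing.Theory.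
Local Open Scope ring_scope.

(* A is spanned by the commuting idempotents [pi x], so a character [chi] of A
   is determined by the character [x |-> chi (pi x)] of E, which is tight
   because [chi] respects products and finite joins of idempotents.
   Conversely a tight character [phi] extends linearly to A: were
   [sum k_i pi x_i = 0] while [sum k_i phi x_i <> 0], then [pi z], for [z] the
   meet of the [x_i] with [phi x_i], would lie below the join of the
   [pi (z x_i)] with [phi x_i = false], contradicting tightness.  Both
   correspondences only inspect finitely many points, whence the homeomorphism.
   Every ideal missing an idempotent lies in a maximal such ideal, which is
   prime, hence the kernel of a tight character; this makes the Gelfand
   transform injective with compact supports.  It is onto C_c because the
   support of a locally constant function is covered by finitely many basic
   open sets [{phi | phi = phi0 on L}], whose indicators are transforms of the
   idempotents [pi m - pi m (join of the pi x, x in L, phi0 x = false)], [m] the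
   meet of the [x] in [L] with [phi0 x]. *)

Lemma In_mem (T : eqType) (x : T) (s : seq T) : List.In x s <-> x \in s.
Proof.
elim: s => [|y s IH] //=; rewrite inE; split.
  by case=> [->|/IH ->]; rewrite ?eqxx ?orbT.
by case/orP=> [/eqP ->|/IH]; [left|right].
Qed.

Lemma has_In (T : Type) (b : pred T) (s : seq T) x : List.In x s -> b x -> has b s.
Proof.
elim: s => [|y s IH] //= [<- ->//|/IH h bx]; by rewrite h ?orbT.
Qed.

Lemma all_eqb_filter (T : Type) (phi p : pred T) (L : seq T) :
  all phi [seq x <- L | p x] && ~~ has phi [seq x <- L | ~~ p x] =
  all (fun x => phi x == p x) L.
Proof.
elim: L => [|x L IH] //=.
by case hp: (p x); case hx: (phi x) => /=; rewrite ?hx ?hp //= ?andbF.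
Qed.

Section Topology.
Variables (T : Type) (tau : topology T).

Lemma not_closureP (S : T -> Prop) x : ~ Defs.closure tau S x ->
  exists V, [/\ tau V, V x & forall y, V y -> ~ S y].
Proof.
move=> hx; apply: contrapT => hV; apply: hx => V oV Vx.
apply: contrapT => hS; apply: hV; exists V; split => // y Vy Sy.
by apply: hS; exists y.
Qed.

(* The open sets of [tau] need not be closed under unions, so the complement
   of the closure is covered by all open sets missing [S] rather than by a
   single open set. *)
Lemma compact_closure_sub (C S : T -> Prop) :
  compact tau C -> (forall x, Defs.closure tau S x -> C x) ->
  compact tau (Defs.closure tau S).
Proof.
move=> cC clSC I U oU covU.
pose J := (I + {V | tau V /\ forall y, V y -> ~ S y})%type.
pose UJ (j : J) := match j with inl i => U i | inr V => sval V end.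
have [s covs] : exists s : seq J, forall x, C x -> exists j, List.In j s /\ UJ j x.
  apply: cC; first by case=> [i|[V [oV _]]] /=; [apply: oU|].
  move=> x Cx; have [clx|nclx] := pselect (Defs.closure tau S x).
    by have [i Ui] := covU x clx; exists (inl i).
  have [V [oV Vx VS]] := not_closureP nclx.
  by exists (inr (exist _ V (conj oV VS))).
exists (pmap (fun j : J => if j is inl i then Some i else None) s) => x clx.
have [[i|[V [oV VS]]] [js Uj]] := covs x (clSC x clx).
  exists i; split => //; elim: s js {covs} => [|j s IH] //= [->|js]; first by left.
  by case: j => [i'|V] /=; [right|]; apply: IH.
by have [y [Vy Sy]] := clx V oV Uj; case: (VS y).
Qed.
End Topology.

Section PointwiseSubspace.
Variables (X : eqType) (Y : Type) (P : (X -> Y) -> Prop).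
Local Notation tauP := (subspace_top (pointwise_top X Y) P).

Definition agree_on (L : seq X) (f g : X -> Y) := forall x, x \in L -> f x = g x.

Lemma subspace_pointwise_nbhs (U : {f | P f} -> Prop) t : tauP U -> U t ->
  exists L, forall t', agree_on L (sval t') (sval t) -> U t'.
Proof.
move=> [W [oW WU]] /WU Wt; have [L hL] := oW _ Wt.
by exists L => t' ht'; apply/WU/hL => x /In_mem; exact: ht'.
Qed.

Lemma subspace_pointwise_openP (U : {f | P f} -> Prop) :
  (forall t, U t -> exists L, forall t', agree_on L (sval t') (sval t) -> U t') ->
  tauP U.
Proof.
move=> nbhsU; exists (fun f => exists t, U t /\ exists L,
  (forall t', agree_on L (sval t') (sval t) -> U t') /\ agree_on L f (sval t)).
split.
  move=> f [t [Ut [L [hL hf]]]]; exists L => g hg; exists t; split => //.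
  by exists L; split => // x xL; rewrite hg ?hf //; exact/In_mem.
move=> t; split => [Ut|[t0 [_ [L [hL ht]]]]]; last exact: hL.
by have [L hL] := nbhsU t Ut; exists t; split => //; exists L.
Qed.

Lemma agree_on_open (f : X -> Y) L : tauP (fun t => agree_on L (sval t) f).
Proof.
by apply: subspace_pointwise_openP => t ht; exists L => t' ht' x xL; rewrite ht' ?ht.
Qed.

End PointwiseSubspace.

Section BoolNat.
Variable R : nzRingType.
Implicit Types a b : bool.

Lemma natr_andb a b : (a && b)%:R = a%:R * b%:R :> R.
Proof. by case: a; case: b; rewrite ?mulr1 ?mulr0. Qed.

Lemma natr_orb a b : (a || b)%:R = a%:R + b%:R - a%:R * b%:R :> R.
Proof. by case: a; case: b; rewrite ?mul0r ?mulr0 ?mul1r ?subr0 ?add0r ?addr0 ?addrK. Qed.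

Lemma natr_bool_eq1 b : ((b%:R : R) == 1) = b.
Proof. by case: b; rewrite ?eqxx // eq_sym oner_eq0. Qed.

End BoolNat.

Lemma idemf_natr (K : fieldType) (c : K) : c * c = c -> c = (c == 1)%:R.
Proof.
case: (c =P 1) => [->|nc1] //= cc.
have /eqP : c * (c - 1) = 0 by rewrite mulrBr mulr1 cc subrr.
by rewrite mulf_eq0 subr_eq0 => /orP[/eqP|/eqP].
Qed.

Section Algebra.
Variables (K : fieldType) (A : lmodType K) (mul : A -> A -> A).
Hypothesis hA : is_algebra mul.

Lemma amulA x y z : mul x (mul y z) = mul (mul x y) z. Proof. by case: hA. Qed.
Lemma amulDl x y z : mul (x + y) z = mul x z + mul y z.
Proof. by case: hA => _ []. Qed.
Lemma amulDr x y z : mul x (y + z) = mul x y + mul x z.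
Proof. by case: hA => _ [_ []]. Qed.
Lemma amulZl (k : K) x y : mul (k *: x) y = k *: mul x y.
Proof. by case: hA => _ [_ [_ []]]. Qed.
Lemma amulZr (k : K) x y : mul x (k *: y) = k *: mul x y.
Proof. by case: hA => _ [_ [_ []]]. Qed.
Lemma amul0l x : mul 0 x = 0.
Proof. by rewrite -(scale0r (0 : A)) amulZl !scale0r. Qed.
Lemma amul0r x : mul x 0 = 0.
Proof. by rewrite -(scale0r (0 : A)) amulZr !scale0r. Qed.
Lemma amulNl x y : mul (- x) y = - mul x y.
Proof. by rewrite -scaleN1r amulZl scaleN1r. Qed.
Lemma amulNr x y : mul x (- y) = - mul x y.
Proof. by rewrite -scaleN1r amulZr scaleN1r. Qed.
Lemma amulBl x y z : mul (x - y) z = mul x z - mul y z.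
Proof. by rewrite amulDl amulNl. Qed.
Lemma amulBr x y z : mul x (y - z) = mul x y - mul x z.
Proof. by rewrite amulDr amulNr. Qed.

Lemma amul_sumr (I : Type) (r : seq I) (P : pred I) (F : I -> A) x :
  mul x (\sum_(i <- r | P i) F i) = \sum_(i <- r | P i) mul x (F i).
Proof. exact: (big_morph _ (amulDr x) (amul0r x)). Qed.

Lemma amul_suml (I : Type) (r : seq I) (P : pred I) (F : I -> A) x :
  mul (\sum_(i <- r | P i) F i) x = \sum_(i <- r | P i) mul (F i) x.
Proof. exact: (big_morph (mul^~ x) (fun a b => amulDl a b x) (amul0l x)). Qed.

Lemma idem_join_cons0 l : idem_join mul (0 :: l) = idem_join mul l.
Proof. by rewrite /= amul0l add0r subr0. Qed.

(* Under a character taking the [e i] to 0 or 1, [glue s c e] takes the value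
   [c i] of the first [i] with [e i = 1] (see [alg_char_glue]). *)
Definition glue (I : Type) (s : seq I) (c : I -> K) (e : I -> A) : A :=
  foldr (fun i g => c i *: e i + (g - mul (e i) g)) 0 s.

Definition is_ideal (I : A -> Prop) :=
  [/\ I 0, forall x y, I x -> I y -> I (x + y),
      forall (k : K) x, I x -> I (k *: x) & forall a x, I x -> I (mul a x)].

Section Ideal.
Variable I : A -> Prop.
Hypothesis idI : is_ideal I.

Lemma ideal0 : I 0. Proof. by case: idI. Qed.
Lemma idealD x y : I x -> I y -> I (x + y). Proof. by case: idI => _ D _ _; apply: D. Qed.
Lemma idealZ k x : I x -> I (k *: x). Proof. by case: idI => _ _ Z _; apply: Z. Qed.
Lemma idealM a x : I x -> I (mul a x). Proof. by case: idI => _ _ _ M; apply: M. Qed.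
Lemma idealN x : I x -> I (- x). Proof. by rewrite -scaleN1r; apply: idealZ. Qed.
Lemma idealB x y : I x -> I y -> I (x - y).
Proof. by move=> Ix Iy; apply: idealD => //; apply: idealN. Qed.

Lemma ideal_idem_join l : (forall e, e \in l -> I e) -> I (idem_join mul l).
Proof.
elim: l => [|e l IH] Il /=; first exact: ideal0.
have Ie : I e by apply: Il; rewrite mem_head.
have IJ : I (idem_join mul l) by apply: IH => f fl; apply: Il; rewrite inE fl orbT.
by apply: idealB; [apply: idealD|apply: idealM].
Qed.

End Ideal.

Lemma ideal_chain_union (I : A -> Prop) (F : (A -> Prop) -> Prop) :
  is_ideal I -> (forall J, F J -> is_ideal (fun x => J x \/ I x)) ->
  (forall J J', F J -> F J' -> (forall x, J x -> J' x) \/ (forall x, J' x -> J x)) ->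
  is_ideal (fun x => (exists2 J, F J & J x) \/ I x).
Proof.
move=> idI idF Ftot.
have lift J x : F J -> J x \/ I x -> (exists2 J, F J & J x) \/ I x.
  by move=> FJ [Jx|Ix]; [left; exists J|right].
split; first by right; apply: ideal0.
- move=> x y [[J FJ Jx]|Ix] [[J' FJ' J'y]|Iy]; last by right; apply: idealD.
  + have [JJ'|J'J] := Ftot J J' FJ FJ'.
      apply: (lift J') => //; case: (idF _ FJ') => _ D _ _.
      by apply: D; left => //; apply: JJ'.
    apply: (lift J) => //; case: (idF _ FJ) => _ D _ _.
    by apply: D; left => //; apply: J'J.
  + by apply: (lift J) => //; case: (idF _ FJ) => _ D _ _; apply: D; [left|right].
  + by apply: (lift J') => //; case: (idF _ FJ') => _ D _ _; apply: D; [right|left].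
- move=> k x [[J FJ Jx]|Ix]; last by right; apply: idealZ.
  by apply: (lift J) => //; case: (idF _ FJ) => _ _ Z _; apply: Z; left.
- move=> a x [[J FJ Jx]|Ix]; last by right; apply: idealM.
  by apply: (lift J) => //; case: (idF _ FJ) => _ _ _ M; apply: M; left.
Qed.

(* Zorn is applied to the ideals [J \/ I] rather than to ideals containing
   [I], so that the empty chain has an upper bound. *)
Lemma exists_max_ideal_avoiding (I : A -> Prop) e : is_ideal I -> ~ I e ->
  exists M : A -> Prop, [/\ is_ideal M, ~ M e, (forall x, I x -> M x) &
    forall B, is_ideal B -> ~ B e -> (forall x, M x -> B x) -> forall x, B x -> M x].
Proof.
move=> idI nIe.
pose P (J : A -> Prop) := is_ideal (fun x => J x \/ I x) /\ ~ (J e \/ I e).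
have [M [[idM nMe] maxM]] : exists M, P M /\ forall B, classical_sets.proper M B -> ~ P B.
  apply: classical_sets.Zorn_bigcup => F FP Ftot.
  rewrite /P /classical_sets.bigcup /classical_sets.mkset; split.
    by apply: ideal_chain_union => // J /FP [].
  by case=> [[J /FP [_ nJe] Je]|//]; apply: nJe; left.
exists (fun x => M x \/ I x); split => //; first by move=> x Ix; right.
move=> B idB nBe MB x Bx; apply: contrapT => nMx.
have BI : (fun x => B x \/ I x) = B.
  by apply/funext => y; apply/propext; split=> [[//|Iy]|]; [apply: MB; right|left].
apply: (maxM B); last by rewrite /P BI; split=> // [[//|Ie]]; apply: nIe.
split; first by move=> y My; apply: MB; left.
by move=> BM; apply: nMx; left; apply: BM.
Qed.

Definition ideal_adjoin (M : A -> Prop) b :=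
  fun x => exists i a k, M i /\ x = i + mul a b + k *: b.

Lemma is_ideal_adjoin M b : is_ideal M -> is_ideal (ideal_adjoin M b).
Proof.
move=> idM; split.
- by exists 0, 0, 0; rewrite amul0l scale0r !addr0; split=> //; apply: ideal0.
- move=> _ _ [i1 [a1 [k1 [M1 ->]]]] [i2 [a2 [k2 [M2 ->]]]].
  exists (i1 + i2), (a1 + a2), (k1 + k2); split; first exact: idealD.
  by rewrite amulDl scalerDl addrACA (addrACA i1).
- move=> k _ [i [a [k1 [Mi ->]]]]; exists (k *: i), (k *: a), (k * k1).
  by split; [apply: idealZ|rewrite !scalerDr amulZl scalerA].
- move=> r _ [i [a [k1 [Mi ->]]]]; exists (mul r i), (mul r a + k1 *: r), 0.
  split; first exact: idealM.
  by rewrite scale0r addr0 !amulDr amulDl amulZr amulZl amulA addrA.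
Qed.

Section Commutative.
Hypothesis amulC : forall x y, mul x y = mul y x.

Lemma idealMC (I : A -> Prop) a x : is_ideal I -> I x -> I (mul x a).
Proof. by move=> idI Ix; rewrite amulC; apply: idealM. Qed.

Lemma max_ideal_avoiding_idem_prime (M : A -> Prop) e :
  is_ideal M -> ~ M e -> mul e e = e ->
  (forall B, is_ideal B -> ~ B e -> (forall x, M x -> B x) -> forall x, B x -> M x) ->
  forall b c, M (mul b c) -> M b \/ M c.
Proof.
move=> idM nMe ee maxM.
have adj b : ~ M b -> ideal_adjoin M b e.
  move=> nMb; apply: contrapT => nAe; apply: nMb.
  apply: (maxM _ (is_ideal_adjoin b idM) nAe).
    by move=> x Mx; exists x, 0, 0; rewrite amul0l scale0r !addr0.
  by exists 0, 0, 1; rewrite amul0l scale1r !add0r; split=> //; apply: ideal0.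
move=> b c Mbc; apply: contrapT => /not_orP[/adj [i1 [a1 [k1 [M1 e1]]]]].
move=> /adj [i2 [a2 [k2 [M2 e2]]]]; apply: nMe; rewrite -ee {1}e1 e2.
(* every term of the expanded product contains [i1], [i2] or [b c] *)
have Mbc' : M (mul (mul a1 b + k1 *: b) c).
  rewrite amulDl amulZl -amulA.
  by apply: (idealD idM); [apply: (idealM idM)|apply: (idealZ idM)].
rewrite -addrA amulDl; apply: (idealD idM); first exact: idealMC.
rewrite !amulDr amulZr; apply: (idealD idM); last exact: (idealZ idM).
apply: (idealD idM); first exact: (idealM idM).
by rewrite (amulC a2) amulA amulC; apply: (idealM idM).
Qed.

Lemma idem_join_le l X : (forall e, e \in l -> idem_le mul e X) ->
  idem_le mul (idem_join mul l) X.
Proof.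
rewrite /idem_le; elim: l => [|e l IH] leX /=; first exact: amul0l.
have eX : mul e X = e by apply: leX; rewrite mem_head.
have JX : mul (idem_join mul l) X = idem_join mul l.
  by apply: IH => f fl; apply: leX; rewrite inE fl orbT.
by rewrite amulBl amulDl eX JX -amulA JX.
Qed.

Lemma le_idem_join l e : (forall f, f \in l -> mul f f = f) -> e \in l ->
  idem_le mul e (idem_join mul l).
Proof.
rewrite /idem_le; elim: l => [|f l IH] idl //=.
rewrite inE => /orP[/eqP ->|el].
  by rewrite amulBr amulDr amulA (idl f (mem_head _ _)) addrK.
have eJ : mul e (idem_join mul l) = e.
  by apply: IH => // g gl; apply: idl; rewrite inE gl orbT.
by rewrite amulBr amulDr eJ amulA (amulC e f) -amulA eJ (amulC f e) addrC addKr.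
Qed.

Lemma idem_join_idem l : (forall e, e \in l -> mul e e = e) ->
  mul (idem_join mul l) (idem_join mul l) = idem_join mul l.
Proof. by move=> idl; apply: idem_join_le => e el; apply: le_idem_join. Qed.

End Commutative.

Section Character.
Variable chi : A -> K.
Hypothesis hchi : is_alg_character mul chi.

Lemma alg_charD x y : chi (x + y) = chi x + chi y. Proof. by case: hchi => _ []. Qed.
Lemma alg_charZ k x : chi (k *: x) = k * chi x. Proof. by case: hchi => _ [_ []]. Qed.
Lemma alg_charM x y : chi (mul x y) = chi x * chi y. Proof. by case: hchi => _ [_ []]. Qed.
Lemma alg_char0 : chi 0 = 0. Proof. by rewrite -(scale0r (0 : A)) alg_charZ mul0r. Qed.
Lemma alg_charN x : chi (- x) = - chi x. Proof. by rewrite -scaleN1r alg_charZ mulN1r. Qed.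
Lemma alg_charB x y : chi (x - y) = chi x - chi y.
Proof. by rewrite alg_charD alg_charN. Qed.

Lemma alg_char_idem e : mul e e = e -> chi e = (chi e == 1)%:R.
Proof. by move=> ee; apply: idemf_natr; rewrite -alg_charM ee. Qed.

Lemma alg_char_idem_join l : (forall e, e \in l -> mul e e = e) ->
  chi (idem_join mul l) = (has (fun e => chi e == 1) l)%:R.
Proof.
elim: l => [|e l IH] idl /=; first exact: alg_char0.
rewrite alg_charB alg_charD alg_charM natr_orb IH => [|f fl]; last first.
  by apply: idl; rewrite inE fl orbT.
by rewrite -alg_char_idem // idl ?mem_head.
Qed.

Lemma alg_char_glue (I : Type) (s : seq I) (c : I -> K) (e : I -> A)
    (b : I -> bool) v :
  (forall i, List.In i s -> chi (e i) = (b i)%:R) ->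
  (forall i, List.In i s -> b i -> c i = v) ->
  chi (glue s c e) = (has b s)%:R * v.
Proof.
elim: s => [|i s IH] eb cv /=; first by rewrite alg_char0 mul0r.
rewrite alg_charD alg_charZ alg_charB alg_charM eb; last by left.
rewrite IH => [||j js]; [|by move=> j js; apply: eb; right|by apply: cv; right].
case: (b i) (cv i (or_introl erefl)) => [-> //|_] /=.
  by rewrite !mul1r mulr1 subrr addr0.
by rewrite mulr0 mul0r subr0 add0r.
Qed.

End Character.

End Algebra.

Section Semilattice.
Variables (d : Order.disp_t) (E : bMeetSemilatticeType d)
  (K : fieldType) (A : lmodType K) (mul : A -> A -> A).
Hypothesis hA : is_algebra mul.
Variable pi : E -> A.
Hypothesis hpi0 : pi \bot%O = 0.
Hypothesis hpiM : forall x y : E, pi (x `&` y)%O = mul (pi x) (pi y).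
Hypothesis hgen : generates mul (fun a => exists x : E, a = pi x).

Implicit Types (phi : E -> bool) (r : seq (K * E)).

Local Notation amulA := (amulA hA).
Local Notation amulDl := (amulDl hA).
Local Notation amulDr := (amulDr hA).
Local Notation amulZl := (amulZl hA).
Local Notation amulZr := (amulZr hA).
Local Notation amul0l := (amul0l hA).
Local Notation amul0r := (amul0r hA).
Local Notation amulBl := (amulBl hA).
Local Notation amul_suml := (amul_suml hA).
Local Notation amul_sumr := (amul_sumr hA).

Definition lincomb (r : seq (K * E)) : A := \sum_(p <- r) p.1 *: pi p.2.

Lemma lincomb1 x : lincomb [:: (1, x)] = pi x.
Proof. by rewrite /lincomb big_seq1 scale1r. Qed.

Lemma lincomb_cons p r : lincomb (p :: r) = p.1 *: pi p.2 + lincomb r.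
Proof. exact: big_cons. Qed.

Lemma lincomb_cat r1 r2 : lincomb (r1 ++ r2) = lincomb r1 + lincomb r2.
Proof. exact: big_cat. Qed.

Lemma lincomb_scale k r : lincomb [seq (k * p.1, p.2) | p <- r] = k *: lincomb r.
Proof. by rewrite /lincomb big_map scaler_sumr; apply: eq_bigr => p _; rewrite scalerA. Qed.

Lemma lincomb_mul r1 r2 : mul (lincomb r1) (lincomb r2) =
  lincomb [seq (p.1 * q.1, (p.2 `&` q.2)%O) | p <- r1, q <- r2].
Proof.
elim: r1 => [|p r1 IH]; first by rewrite /lincomb big_nil amul0l.
rewrite /= lincomb_cat -IH lincomb_cons amulDl; congr (_ + _).
rewrite amulZl amul_sumr /lincomb big_map scaler_sumr; apply: eq_bigr => q _.
by rewrite amulZr hpiM scalerA.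
Qed.

Lemma lincomb_surj a : exists r, a = lincomb r.
Proof.
move: a; apply: (hgen (S := fun a => exists r, a = lincomb r)).
- by exists [::]; rewrite /lincomb big_nil.
- by move=> _ _ [r1 ->] [r2 ->]; exists (r1 ++ r2); rewrite lincomb_cat.
- by move=> k _ [r ->]; exists [seq (k * p.1, p.2) | p <- r]; rewrite lincomb_scale.
- by move=> _ _ [r1 ->] [r2 ->]; eexists; rewrite lincomb_mul.
- by move=> _ [x ->]; exists [:: (1, x)]; rewrite lincomb1.
Qed.

Lemma amulC a b : mul a b = mul b a.
Proof.
have mul_piC x c : mul (pi x) c = mul c (pi x).
  have [r ->] := lincomb_surj c.
  rewrite /lincomb amul_sumr amul_suml; apply: eq_bigr => p _.
  by rewrite amulZr amulZl -!hpiM meetC.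
have [r ->] := lincomb_surj a.
rewrite /lincomb amul_sumr amul_suml; apply: eq_bigr => p _.
by rewrite amulZl amulZr mul_piC.
Qed.

Lemma pi_idem x : mul (pi x) (pi x) = pi x.
Proof. by rewrite -hpiM meetxx. Qed.

Lemma lincomb_le r X : (forall p, p \in r -> idem_le mul (pi p.2) X) ->
  idem_le mul (lincomb r) X.
Proof.
move=> le_rX; rewrite /idem_le /lincomb amul_suml; apply: eq_big_seq => p pr.
by rewrite amulZl le_rX.
Qed.

Lemma map_pi_idem ys e : e \in map pi ys -> mul e e = e.
Proof. by move=> /mapP[x _ ->]; apply: pi_idem. Qed.

Lemma lincomb_le_support r : idem_le mul (lincomb r) (idem_join mul (map pi (map snd r))).
Proof.
apply: lincomb_le => p pr; apply: le_idem_join => //; first exact: amulC.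
  exact: map_pi_idem.
by apply/map_f/map_f.
Qed.

Lemma ideal_lincomb (M : A -> Prop) r : is_ideal mul M ->
  (forall p, p \in r -> M (pi p.2)) -> M (lincomb r).
Proof.
move=> idM Mr; rewrite /lincomb; elim: r Mr => [|p r IH] Mr.
  by rewrite big_nil; apply: ideal0 idM.
rewrite big_cons; apply: (idealD idM).
  by apply: (idealZ idM); apply: Mr; rewrite mem_head.
by apply: IH => q qr; apply: Mr; rewrite inE qr orbT.
Qed.

Definition lincomb_val (phi : E -> bool) (r : seq (K * E)) : K :=
  \sum_(p <- r) p.1 * (phi p.2)%:R.

Lemma lincomb_val_cons phi p r :
  lincomb_val phi (p :: r) = p.1 * (phi p.2)%:R + lincomb_val phi r.
Proof. exact: big_cons. Qed.

Lemma lincomb_val_cat phi r1 r2 :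
  lincomb_val phi (r1 ++ r2) = lincomb_val phi r1 + lincomb_val phi r2.
Proof. exact: big_cat. Qed.

Lemma lincomb_val_scale phi k r :
  lincomb_val phi [seq (k * p.1, p.2) | p <- r] = k * lincomb_val phi r.
Proof. by rewrite /lincomb_val big_map mulr_sumr; apply: eq_bigr => p _; rewrite mulrA. Qed.

Lemma lincomb_val_mul phi r1 r2 : is_character phi ->
  lincomb_val phi [seq (p.1 * q.1, (p.2 `&` q.2)%O) | p <- r1, q <- r2] =
  lincomb_val phi r1 * lincomb_val phi r2.
Proof.
move=> [_ [_ phiM]]; elim: r1 => [|p r1 IH]; first by rewrite /lincomb_val !big_nil mul0r.
rewrite /= lincomb_val_cat IH lincomb_val_cons mulrDl; congr (_ + _).
rewrite /lincomb_val big_map mulr_sumr; apply: eq_bigr => q _.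
by rewrite phiM natr_andb mulrACA.
Qed.

Lemma lincomb_val_eq0 phi r : ~~ has (fun p => phi p.2) r -> lincomb_val phi r = 0.
Proof.
move=> /hasPn r0; rewrite /lincomb_val big_seq big1 // => p /r0 /negbTE ->.
by rewrite mulr0.
Qed.

Definition meets (x0 : E) (l : seq E) : E := foldr (fun x m => x `&` m)%O x0 l.

Lemma char_meets phi x0 l : is_character phi -> phi (meets x0 l) = phi x0 && all phi l.
Proof.
by move=> [_ [_ phiM]]; elim: l => [|x l IH] /=; rewrite ?andbT // phiM IH andbCA.
Qed.

Lemma meets_le x0 l x : x \in l -> (meets x0 l <= x)%O.
Proof.
elim: l => [|y l IH] //=; rewrite inE => /orP[/eqP ->|/IH]; first exact: leIl.
exact: leIxr.
Qed.

Definition residue (phi : E -> bool) (z : E) (r : seq (K * E)) :=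
  [seq (p.1, (z `&` p.2)%O) | p <- r & ~~ phi p.2].

Lemma residue_char phi z r : is_character phi ->
  all (fun p => ~~ phi p.2) (residue phi z r).
Proof.
move=> [_ [_ phiM]]; rewrite /residue all_map; apply/allP => p.
by rewrite mem_filter /= phiM => /andP[/negbTE -> _]; rewrite andbF.
Qed.

Lemma mul_pi_lincomb_le phi z r : (forall p, p \in r -> phi p.2 -> (z <= p.2)%O) ->
  mul (pi z) (lincomb r) = lincomb_val phi r *: pi z + lincomb (residue phi z r).
Proof.
elim: r => [|q r IH] zr.
  by rewrite /lincomb /lincomb_val !big_nil amul0r scale0r addr0.
rewrite lincomb_cons lincomb_val_cons amulDr IH => [|p pr]; last first.
  by apply: zr; rewrite inE pr orbT.
rewrite amulZr -hpiM /residue /=; case phiq: (phi q.2) => /=.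
  by rewrite (meet_l (zr q (mem_head _ _) phiq)) mulr1 scalerDl addrA.
by rewrite lincomb_cons mulr0 add0r addrCA.
Qed.

Lemma mul_pi_lincomb phi r : is_character phi -> has (fun p => phi p.2) r ->
  exists2 z, phi z &
    mul (pi z) (lincomb r) = lincomb_val phi r *: pi z + lincomb (residue phi z r).
Proof.
move=> chphi /hasP[p0 p0r phip0].
pose z := meets p0.2 [seq p.2 | p <- r & phi p.2].
exists z; last first.
  apply: mul_pi_lincomb_le => p pr phip; apply: meets_le.
  by apply/mapP; exists p; rewrite ?mem_filter ?phip.
rewrite char_meets // phip0; apply/allP => x /mapP[p].
by rewrite mem_filter => /andP[phip _] ->.
Qed.

Lemma tight_lincomb_val_eq0 phi r : tight_character mul pi phi ->
  lincomb r = 0 -> lincomb_val phi r = 0.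
Proof.
move=> [chphi tphi] r0; have [hr|nhr] := boolP (has (fun p => phi p.2) r); last first.
  exact: lincomb_val_eq0.
have [z phiz zr] := mul_pi_lincomb chphi hr; apply: contrapT => /eqP nv.
have {}zr : pi z = - (lincomb_val phi r)^-1 *: lincomb (residue phi z r).
  move: zr; rewrite r0 amul0r => /esym/eqP; rewrite addr_eq0 => /eqP zr.
  by rewrite scaleNr -scalerN -zr scalerA mulVf // scale1r.
(* tightness only speaks of nonempty lists, hence the dummy [\bot] *)
have le_z : idem_le mul (pi z)
    (idem_join mul (map pi (\bot%O :: map snd (residue phi z r)))).
  by rewrite map_cons hpi0 idem_join_cons0 // /idem_le {1}zr amulZl lincomb_le_support -zr.
have nonnil : \bot%O :: map snd (residue phi z r) <> [::] by [].
move: (tphi z _ nonnil le_z phiz) => /=; have [_ [-> _]] := chphi.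
move=> /hasP[x /mapP[p pr ->]]; move/allP: (residue_char z r chphi) => /(_ p pr).
by move=> /negbTE ->.
Qed.

Definition lincomb_rep (a : A) : seq (K * E) := sval (cid (lincomb_surj a)).

Lemma lincomb_repK a : lincomb (lincomb_rep a) = a.
Proof. by rewrite /lincomb_rep; case: cid. Qed.

(* Independent of the representation of [a], by [tight_lincomb_val_eq0]. *)
Definition char_ext phi (a : A) : K := lincomb_val phi (lincomb_rep a).

Section TightCharacter.
Variable phi : E -> bool.
Hypothesis tphi : tight_character mul pi phi.

Lemma char_ext_lincomb r : char_ext phi (lincomb r) = lincomb_val phi r.
Proof.
apply/eqP; rewrite -subr_eq0 -mulN1r -lincomb_val_scale -lincomb_val_cat.
apply/eqP/tight_lincomb_val_eq0 => //.
by rewrite lincomb_cat lincomb_scale lincomb_repK scaleN1r subrr.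
Qed.

Lemma char_ext_pi x : char_ext phi (pi x) = (phi x)%:R.
Proof.
by rewrite -lincomb1 char_ext_lincomb lincomb_val_cons mul1r /lincomb_val big_nil addr0.
Qed.

Lemma char_ext_alg : is_alg_character mul (char_ext phi).
Proof.
split; last split; [|move=> a b|split => [k a|a b]].
- have [[[x phix] _] _] := tphi; exists (pi x); rewrite char_ext_pi phix.
  exact/eqP/oner_neq0.
- have [r1 ->] := lincomb_surj a; have [r2 ->] := lincomb_surj b.
  by rewrite -lincomb_cat !char_ext_lincomb lincomb_val_cat.
- have [r ->] := lincomb_surj a.
  by rewrite -lincomb_scale !char_ext_lincomb lincomb_val_scale.
- have [r1 ->] := lincomb_surj a; have [r2 ->] := lincomb_surj b.
  by rewrite lincomb_mul !char_ext_lincomb lincomb_val_mul //; case: tphi.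
Qed.

End TightCharacter.

Definition char_restr (chi : A -> K) : E -> bool := fun x => chi (pi x) == 1.

Section AlgCharacter.
Variable chi : A -> K.
Hypothesis hchi : is_alg_character mul chi.

Lemma alg_char_pi x : chi (pi x) = (char_restr chi x)%:R.
Proof. by rewrite (alg_char_idem hchi (pi_idem x)). Qed.

Lemma alg_char_lincomb r : chi (lincomb r) = lincomb_val (char_restr chi) r.
Proof.
rewrite /lincomb (big_morph chi (alg_charD hchi) (alg_char0 hchi)).
by apply: eq_bigr => p _; rewrite (alg_charZ hchi) alg_char_pi.
Qed.

Lemma char_restr_tight : tight_character mul pi (char_restr chi).
Proof.
split; first split; [|split|].
- have [[a chia] _] := hchi; have [r ar] := lincomb_surj a.
  move: chia; rewrite ar alg_char_lincomb.
  have [/hasP[p _ chip] _|/lincomb_val_eq0 -> //] :=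
    boolP (has (fun p => char_restr chi p.2) r).
  by exists p.2.
- by rewrite /char_restr hpi0 (alg_char0 hchi) eq_sym oner_eq0.
- move=> x y; rewrite {1}/char_restr hpiM (alg_charM hchi) !alg_char_pi.
  by rewrite -natr_andb natr_bool_eq1.
- move=> x ys _; rewrite /idem_le => /(congr1 chi).
  rewrite (alg_charM hchi) (alg_char_idem_join hchi (@map_pi_idem _)).
  rewrite has_map alg_char_pi => + chix; rewrite chix mul1r.
  by case: has => // /eqP; rewrite eq_sym oner_eq0.
Qed.

End AlgCharacter.

Lemma char_ext_char_restr chi :
  is_alg_character mul chi -> char_ext (char_restr chi) = chi.
Proof.
move=> hchi; apply/funext => a; have [r ->] := lincomb_surj a.
by rewrite char_ext_lincomb ?alg_char_lincomb //; apply: char_restr_tight.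
Qed.

Lemma char_restr_char_ext phi :
  tight_character mul pi phi -> char_restr (char_ext phi) = phi.
Proof.
by move=> tphi; apply/funext => x; rewrite /char_restr char_ext_pi // natr_bool_eq1.
Qed.

Lemma char_ext_idem_join phi ys : tight_character mul pi phi ->
  char_ext phi (idem_join mul (map pi ys)) = (has phi ys)%:R.
Proof.
move=> tphi; rewrite (alg_char_idem_join (char_ext_alg tphi) (@map_pi_idem _)).
congr ((nat_of_bool _)%:R).
by elim: ys => //= y ys IH; rewrite IH char_ext_pi // natr_bool_eq1.
Qed.

Definition ideal_char (M : A -> Prop) : E -> bool := fun x => `[< ~ M (pi x) >].

Section PrimeIdeal.
Variable M : A -> Prop.
Hypotheses (idM : is_ideal mul M) (primeM : forall b c, M (mul b c) -> M b \/ M c).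
Hypothesis properM : exists x, ~ M (pi x).

Lemma ideal_charP x : reflect (~ M (pi x)) (ideal_char M x).
Proof. exact: asboolP. Qed.

Lemma ideal_charF x : ideal_char M x = false <-> M (pi x).
Proof. by split=> [/negbT/asboolPn/contrapT //|Mx]; apply/negbTE/asboolPn. Qed.

Lemma ideal_char_tight : tight_character mul pi (ideal_char M).
Proof.
have [x nMx] := properM.
split; first split; [by exists x; apply/ideal_charP|split|].
- by apply/ideal_charF; rewrite hpi0; apply: ideal0 idM.
- move=> y z; rewrite /ideal_char hpiM; apply/asboolP/andP.
    by move=> nMyz; split; apply/ideal_charP => My; apply: nMyz;
      [apply: (idealMC amulC _ idM)|apply: (idealM idM)].
  by case=> /ideal_charP nMy /ideal_charP nMz /primeM [].
- move=> y ys _ le_y /ideal_charP nMy; apply: contrapT => /negP nhas; apply: nMy.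
  rewrite -le_y; apply: (idealM idM); apply: (ideal_idem_join idM) => _ /mapP[w wys ->].
  by apply/ideal_charF/negbTE; apply: contra nhas => ?; apply/hasP; exists w.
Qed.

Lemma ideal_char_split r : has (fun p => ideal_char M p.2) r ->
  exists2 z, ~ M (pi z) &
    M (mul (pi z) (lincomb r) - lincomb_val (ideal_char M) r *: pi z).
Proof.
have chM := proj1 ideal_char_tight.
move=> hr; have [z /ideal_charP nMz zr] := mul_pi_lincomb chM hr.
exists z => //; rewrite zr addrC addKr; apply: ideal_lincomb => // p pr.
by apply/ideal_charF/negbTE; move/allP: (residue_char z r chM) => /(_ p pr).
Qed.

Lemma char_ext_ideal_char_eq0 b : char_ext (ideal_char M) b = 0 <-> M b.
Proof.
have [r ->] := lincomb_surj b; rewrite char_ext_lincomb; last exact: ideal_char_tight.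
have [hr|nhr] := boolP (has (fun p => ideal_char M p.2) r); last first.
  rewrite lincomb_val_eq0 //; split => // _; apply: ideal_lincomb => // p pr.
  by apply/ideal_charF/negbTE; apply: contra nhr => ?; apply/hasP; exists p.
have [z nMz Mzr] := ideal_char_split hr; split=> [v0|Mr].
  by move: Mzr; rewrite v0 scale0r subr0 => /primeM [].
apply: contrapT => /eqP v0; apply: nMz.
have := idealB idM (idealM idM (pi z) Mr) Mzr; rewrite opprB addrCA subrr addr0.
by move=> /(idealZ idM (lincomb_val (ideal_char M) r)^-1); rewrite scalerA mulVf // scale1r.
Qed.

End PrimeIdeal.

Lemma tight_char_avoiding (I : A -> Prop) e : is_ideal mul I -> ~ I e -> mul e e = e ->
  exists2 phi, tight_character mul pi phi &
    (forall b, I b -> char_ext phi b = 0) /\ char_ext phi e = 1.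
Proof.
move=> idI nIe ee; have [M [idM nMe IM maxM]] := exists_max_ideal_avoiding idI nIe.
have primeM := max_ideal_avoiding_idem_prime hA amulC idM nMe ee maxM.
have properM : exists x, ~ M (pi x).
  apply: contrapT => /forallNP allM; apply: nMe; rewrite -(lincomb_repK e).
  by apply: ideal_lincomb => // p _; apply: contrapT; apply: allM.
have kerM := char_ext_ideal_char_eq0 idM primeM properM.
exists (ideal_char M); first exact: ideal_char_tight.
split=> [b /IM /kerM //|].
have := alg_char_idem (char_ext_alg (ideal_char_tight idM primeM properM)) ee.
by case: eqP => // _ e0; case: nMe; apply/kerM.
Qed.

(* [pi z - pi z J] annihilates [a], where [J] is the join of the support of the
   residue; the character [phi] separating [a] from its annihilator is [1] on it. *)
Lemma char_ext_separates a :
  (forall phi, tight_character mul pi phi -> char_ext phi a = 0) -> a = 0.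
Proof.
move=> a0; apply: contrapT => na0; have [r ar] := lincomb_surj a.
pose ann b := mul b a = 0.
have idann : is_ideal mul ann.
  split; rewrite /ann; first exact: amul0l.
  - by move=> x y xa ya; rewrite amulDl xa ya addr0.
  - by move=> k x xa; rewrite amulZl xa scaler0.
  - by move=> c x xa; rewrite -amulA xa amul0r.
have nann : ~ ann (idem_join mul (map pi (map snd r))).
  by rewrite /ann amulC ar lincomb_le_support -ar.
have [phi tphi [ann0 phiu]] :=
  tight_char_avoiding idann nann (idem_join_idem hA amulC (@map_pi_idem _)).
have hr : has (fun p => phi p.2) r.
  move: phiu; rewrite char_ext_idem_join // has_map.
  by case: has => // /eqP; rewrite eq_sym oner_eq0.
have [z phiz] := mul_pi_lincomb (proj1 tphi) hr.
rewrite -(char_ext_lincomb tphi) -ar a0 // scale0r add0r => za.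
pose J := idem_join mul (map pi (map snd (residue phi z r))).
have /ann0 : ann (pi z - mul (pi z) J).
  by rewrite /ann amulBl (amulC (pi z) J) -amulA za amulC lincomb_le_support subrr.
rewrite (alg_charB (char_ext_alg tphi)) (alg_charM (char_ext_alg tphi)) char_ext_pi // phiz.
have resF : has phi (map snd (residue phi z r)) = false.
  apply/negbTE/hasPn => _ /mapP[p pr ->].
  exact: (allP (residue_char z r (proj1 tphi)) p pr).
by rewrite char_ext_idem_join // resF mulr0 subr0 => /eqP; rewrite oner_eq0.
Qed.

Local Notation tight_spec := {phi : E -> bool | tight_character mul pi phi}.
Local Notation alg_spec := {chi : A -> K | is_alg_character mul chi}.
Local Notation tau_tight := (subspace_top (pointwise_top E bool) (tight_character mul pi)).
Local Notation tau_alg := (subspace_top (pointwise_top A K) (is_alg_character mul)).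

Definition char_restr_spec (c : alg_spec) : tight_spec :=
  exist _ (char_restr (sval c)) (char_restr_tight (svalP c)).

Definition char_ext_spec (t : tight_spec) : alg_spec :=
  exist _ (char_ext (sval t)) (char_ext_alg (svalP t)).

Lemma char_restr_specK : cancel char_restr_spec char_ext_spec.
Proof. by case=> chi hchi; apply: eq_exist; apply: char_ext_char_restr. Qed.

Lemma char_ext_specK : cancel char_ext_spec char_restr_spec.
Proof. by case=> phi tphi; apply: eq_exist; apply: char_restr_char_ext. Qed.

Lemma lincomb_val_agree phi psi r :
  agree_on (map snd r) phi psi -> lincomb_val phi r = lincomb_val psi r.
Proof.
move=> agr; rewrite /lincomb_val !big_seq; apply: eq_bigr => p pr.
by rewrite agr // map_f.
Qed.

Lemma char_ext_agree (s : seq A) : exists L, forall phi psi,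
  tight_character mul pi phi -> tight_character mul pi psi ->
  agree_on L phi psi -> agree_on s (char_ext phi) (char_ext psi).
Proof.
exists (flatten [seq map snd (lincomb_rep a) | a <- s]) => phi psi tphi tpsi agr a sa.
rewrite -(lincomb_repK a) !char_ext_lincomb //; apply: lincomb_val_agree => x xr.
apply: agr; apply/flattenP; exists (map snd (lincomb_rep a)) => //.
exact: (map_f (fun b => map snd (lincomb_rep b)) sa).
Qed.

Lemma homeomorphic_spectra : homeomorphic tau_alg tau_tight.
Proof.
exists char_restr_spec; split.
  by exists char_ext_spec; [exact: char_restr_specK|exact: char_ext_specK].
move=> U; split=> oU; apply: subspace_pointwise_openP.
  move=> c Uc; have [L UL] := subspace_pointwise_nbhs oU Uc.
  by exists (map pi L) => c' agr; apply: UL => x xL; rewrite /= /char_restr agr ?map_f.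
move=> t Ut; have [s Us] : exists s, forall c,
    agree_on s (sval c) (sval (char_ext_spec t)) -> U (char_restr_spec c).
  by apply: subspace_pointwise_nbhs oU _; rewrite char_ext_specK.
have [L agrL] := char_ext_agree s.
exists L => t' agr; rewrite -(char_ext_specK t'); apply: Us.
by apply: agrL => //; exact: svalP.
Qed.

Definition gelfand (a : A) (t : tight_spec) : K := char_ext (sval t) a.

Definition basic_idem phi0 x0 (L : seq E) : A :=
  let m := pi (meets x0 [seq x <- L | phi0 x]) in
  m - mul m (idem_join mul (map pi [seq x <- L | ~~ phi0 x])).

Lemma char_ext_basic_idem phi phi0 x0 L : tight_character mul pi phi ->
  char_ext phi (basic_idem phi0 x0 L) = (phi x0 && all (fun x => phi x == phi0 x) L)%:R.
Proof.
move=> tphi; have chi := char_ext_alg tphi.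
rewrite /basic_idem (alg_charB chi) (alg_charM chi).
rewrite !char_ext_pi // char_ext_idem_join // char_meets; last exact: proj1 tphi.
rewrite -(all_eqb_filter phi phi0) andbA.
by case: (_ && _); case: has; rewrite /= ?mulr1 ?mulr0 ?subrr ?subr0.
Qed.

Definition finitely_covered (I : Type) (U : I -> tight_spec -> Prop) (b : A) : Prop :=
  exists s : seq I, forall t, gelfand b t <> 0 -> exists i, List.In i s /\ U i t.

Lemma is_ideal_finitely_covered (I : Type) (U : I -> tight_spec -> Prop) :
  is_ideal mul (finitely_covered U).
Proof.
have chit t := char_ext_alg (svalP t).
split.
- by exists [::] => t; rewrite /gelfand (alg_char0 (chit t)).
- move=> x y [s1 covx] [s2 covy]; exists (s1 ++ s2) => t.
  have [x0|/covx [i [si Ui]] _] := pselect (gelfand x t = 0); last first.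
    by exists i; split=> //; apply: List.in_or_app; left.
  rewrite /gelfand (alg_charD (chit t)) [char_ext _ x]x0 add0r => /covy [i [si Ui]].
  by exists i; split=> //; apply: List.in_or_app; right.
- move=> k x [s covx]; exists s => t; rewrite /gelfand (alg_charZ (chit t)) => nkx.
  by apply: covx => x0; apply: nkx; rewrite /gelfand in x0; rewrite x0 mulr0.
- move=> a x [s covx]; exists s => t; rewrite /gelfand (alg_charM (chit t)) => nax.
  by apply: covx => x0; apply: nax; rewrite /gelfand in x0; rewrite x0 mulr0.
Qed.

(* The finitely covered elements form an ideal; were it to miss [u], a tight
   character [phi] with [char_ext phi u = 1] would kill the basic idempotent of a
   neighbourhood of [phi] inside a single member of the cover. *)
Lemma compact_char_ext_support u : mul u u = u ->
  compact tau_tight (fun t => gelfand u t <> 0).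
Proof.
move=> uu I U oU covU; apply: contrapT => nu.
have [phi tphi [c0 phiu]] := tight_char_avoiding (is_ideal_finitely_covered U) nu uu.
pose t0 : tight_spec := exist _ phi tphi.
have [i Ui] : exists i, U i t0.
  by apply: covU; rewrite /gelfand /= phiu; exact/eqP/oner_neq0.
have [L UL] := subspace_pointwise_nbhs (oU i) Ui.
have [[[x0 phix0] _] _] := tphi.
have /c0 : finitely_covered U (basic_idem phi x0 L).
  exists [:: i] => t; rewrite /gelfand char_ext_basic_idem; last exact: svalP.
  case: andP => // [[_ /allP agr]] _; exists i; split; first by left.
  by apply: UL => x /agr /eqP.
rewrite char_ext_basic_idem // phix0 (_ : all _ L) => [/eqP|]; first by rewrite oner_eq0.
by apply/allP => x _.
Qed.

Lemma Cc_gelfand a : Cc tau_tight (gelfand a).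
Proof.
have [r ->] := lincomb_surj a.
have ga t : gelfand (lincomb r) t = lincomb_val (sval t) r.
  by rewrite /gelfand char_ext_lincomb //; exact: svalP.
split.
  move=> t; exists (fun t' => agree_on (map snd r) (sval t') (sval t)).
  split; first exact: agree_on_open.
  by split=> // t' agr; rewrite !ga; apply: lincomb_val_agree.
apply: (compact_closure_sub
  (compact_char_ext_support (idem_join_idem hA amulC (@map_pi_idem (map snd r))))).
move=> t clt; rewrite /gelfand char_ext_idem_join; last exact: svalP.
have [t' [agr]] := clt _ (agree_on_open _ (sval t) (map snd r)) (fun x _ => erefl).
rewrite ga (lincomb_val_agree agr) has_map.
case: (boolP (has _ r)) => [_ _|/lincomb_val_eq0 -> //]; exact/eqP/oner_neq0.
Qed.

Section GelfandOnto.
Variable f : tight_spec -> K.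
Hypothesis f_lc : locally_constant tau_tight f.
Hypothesis f_cpt : compact tau_tight (Defs.closure tau_tight (fun t => f t <> 0)).

Record patch := Patch {
  center : tight_spec; plist : seq E; pbase : E;
  pbase_true : sval center pbase;
  pbase_mem : pbase \in plist;
  patch_const : forall t, agree_on plist (sval t) (sval center) -> f t = f center }.

Definition in_patch (p : patch) (t : tight_spec) :=
  agree_on (plist p) (sval t) (sval (center p)).

Definition patch_idem (p : patch) := basic_idem (sval (center p)) (pbase p) (plist p).

Lemma gelfand_patch_idem p t : gelfand (patch_idem p) t = `[< in_patch p t >]%:R.
Proof.
rewrite /gelfand char_ext_basic_idem; last exact: svalP.
case: (asboolP (in_patch p t)) => [inp|ninp].
  rewrite (inp _ (pbase_mem p)) pbase_true (_ : all _ _) //.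
  by apply/allP => x xL; rewrite inp.
by case: andP => // [[_ /allP agr]]; case: ninp => x /agr /eqP.
Qed.

Lemma patch_cover : exists s : seq patch, forall t,
  Defs.closure tau_tight (fun t => f t <> 0) t -> exists p, List.In p s /\ in_patch p t.
Proof.
apply: f_cpt => [p|t _]; first exact: agree_on_open.
have [V [oV [Vt fV]]] := f_lc t; have [L VL] := subspace_pointwise_nbhs oV Vt.
have [[[x0 tx0] _] _] := svalP t.
have x0L : x0 \in x0 :: L by rewrite mem_head.
have const t' : agree_on (x0 :: L) (sval t') (sval t) -> f t' = f t.
  by move=> agr; apply/fV/VL => x xL; apply: agr; rewrite inE xL orbT.
by exists (Patch tx0 x0L const).
Qed.

Lemma gelfand_onto : exists a, gelfand a = f.
Proof.
have [s covs] := patch_cover.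
exists (glue mul s (fun p => f (center p)) patch_idem); apply/funext => t.
rewrite /gelfand (alg_char_glue (char_ext_alg (svalP t))
  (b := fun p => `[< in_patch p t >]) (v := f t)).
- case: (boolP (has _ s)) => [_|nhas]; first by rewrite mul1r.
  rewrite mul0r; apply: contrapT => ft0.
  have [|p [ps inp]] := covs t; first by move=> U oU Ut; exists t; split=> // /esym.
  by case/negP: nhas; apply: (has_In ps); apply/asboolP.
- by move=> p _; rewrite -gelfand_patch_idem.
- by move=> p _ /asboolP /patch_const.
Qed.

End GelfandOnto.

Lemma gelfand_alg_iso : alg_iso_Cc mul tau_tight.
Proof.
have chit (t : tight_spec) := char_ext_alg (svalP t).
exists gelfand; split; [|split; [exact: Cc_gelfand|split; [|split; [|split]]]].
- move=> a b gab; apply/subr0_eq/char_ext_separates => phi tphi.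
  have := congr1 (fun g => g (exist _ phi tphi)) gab.
  by rewrite /gelfand /= (alg_charB (char_ext_alg tphi)) => ->; rewrite subrr.
- by move=> f [lc cpt]; apply: gelfand_onto.
- by move=> x y t; apply: (alg_charD (chit t)).
- by move=> k x t; apply: (alg_charZ (chit t)).
- by move=> x y t; apply: (alg_charM (chit t)).
Qed.

End Semilattice.

Theorem proposition15p14
  (d : Order.disp_t) (E : bMeetSemilatticeType d)
  (K : fieldType) (A : lmodType K) (mul : A -> A -> A)
  (hA : is_algebra mul)
  (pi : E -> A)
  (hpi0 : pi \bot%O = 0)
  (hpiM : forall x y : E, pi (x `&` y)%O = mul (pi x) (pi y))
  (hgen : generates mul (fun a => exists x : E, a = pi x)) :
  homeomorphic
    (subspace_top (pointwise_top A K) (is_alg_character mul))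
    (subspace_top (pointwise_top E bool) (tight_character mul pi))
  /\
  alg_iso_Cc mul (subspace_top (pointwise_top E bool) (tight_character mul pi)).
Proof.
split; first exact: (homeomorphic_spectra hA hpi0 hpiM hgen).
exact: (gelfand_alg_iso hA hpi0 hpiM hgen).
Qed.
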